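(* Fix $m\ge2$, an integer panel size $k\ge1$, and a budget $0<B<m$. For every panel decision function $\widetilde x:\mathcal L^k\to\mathcal X_B$ there exists a participatory budgeting instance $\langle m,B,(\mathrm{Cost}_1,\dots,\mathrm{Cost}_n)\rangle$ such that for every $\rho>1$, $$\mathbb E_{S\sim\mathcal U_{k,n}}\big[\textsc{Social-Cost}(\widetilde x(S))\big]>\rho\cdot\textsc{Social-Opt}.$$
   Context: A participatory budgeting instance $\langle m,B,(\mathrm{Cost}_1,\dots,\mathrm{Cost}_n)\rangle$: $m$ projects, budget $B>0$, and for each agent $i\in[n]$ a cost function $\mathrm{Cost}_i:[0,1]^m\to[0,1]$ that is monotone (non-increasing when the allocation increases coordinatewise) and $1$-Lipschitz w.r.t. $\|\cdot\|_1$. $\mathcal L$ is the set of $1$-Lipschitz functions $[0,1]^m\to[0,1]$; $\mathcal X_B=\{x\in[0,1]^m:\sum_jx_j\le B\}$. For a panel $S$ of size $k$ (with $n\ge k$), $\widetilde x(S)$ denotes $\widetilde x$ applied to $(\mathrm{Cost}_i)_{i\in S}$. $\textsc{Social-Cost}(x)=\frac1n\sum_i\mathrm{Cost}_i(x)$, $\textsc{Social-Opt}=\min_{x\in\mathcal X_B}\textsc{Social-Cost}(x)$. $\mathcal U_{k,n}$ is the uniform distribution over size-$k$ subsets of $[n]$. *)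

From HB Require Import structures.
From mathcomp Require Import all_boot all_order all_algebra.
From mathcomp Require Import classical_sets reals.
Import Order.TTheory GRing.Theory Num.Theory.
Local Open Scope ring_scope.

Definition Cube (R : realType) (m : nat) :=
  {x : 'I_m -> R | forall j, 0 <= x j <= 1}.

Definition XB (R : realType) (m : nat) (B : R) :=
  {x : Cube R m | \sum_(j < m) proj1_sig x j <= B}.

Definition pt {R : realType} {m : nat} (x : Cube R m) : 'I_m -> R := proj1_sig x.
Definition xb_pt {R : realType} {m : nat} {B : R} (y : XB R m B) : Cube R m :=
  proj1_sig y.

Definition in_L {R : realType} {m : nat} (f : Cube R m -> R) : Prop :=
  (forall x, 0 <= f x <= 1) /\
  (forall x y, `|f x - f y| <= \sum_(j < m) `|pt x j - pt y j|).

Definition monotone_cost {R : realType} {m : nat} (f : Cube R m -> R) : Prop :=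
  forall x y, (forall j, pt x j <= pt y j) -> f y <= f x.

Definition is_cost {R : realType} {m : nat} (f : Cube R m -> R) : Prop :=
  in_L f /\ monotone_cost f.

Definition social_cost {R : realType} {m n : nat} (Cost : 'I_n -> Cube R m -> R)
  (x : Cube R m) : R := (\sum_(i < n) Cost i x) / n%:R.

Definition social_opt {R : realType} {m n : nat} (B : R)
  (Cost : 'I_n -> Cube R m -> R) : R :=
  inf (range (fun y : XB R m B => social_cost Cost (xb_pt y))).

(* The panel S (a set of agents), listed in increasing order of index. *)
Definition panel {R : realType} {m n : nat} (k : nat) (Cost : 'I_n -> Cube R m -> R)
  (S : {set 'I_n}) : 'I_k -> Cube R m -> R :=
  fun i => nth (fun _ => 0) [seq Cost j | j <- enum S] i.

Definition expected_panel_cost {R : realType} {m n k : nat} {B : R}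
  (xt : ('I_k -> Cube R m -> R) -> XB R m B) (Cost : 'I_n -> Cube R m -> R) : R :=
  (\sum_(S : {set 'I_n} | #|S| == k) social_cost Cost (xb_pt (xt (panel k Cost S))))
  / #|[set S : {set 'I_n} | #|S| == k]|%:R.

From HB Require Import structures.
From mathcomp Require Import all_boot all_order all_algebra.
From mathcomp Require Import classical_sets reals.
From mathcomp Require Import boolp.
From mathcomp Require Import lra.
Import Order.TTheory GRing.Theory Num.Theory.
Local Open Scope ring_scope.

(* On the all-zero profile the mechanism returns a fixed allocation x0, and
   since B < m some project j gets less than t := min 1 B in x0.  Add to k
   zero-cost agents one agent with cost max 0 (t - x_j).  Funding j at level t
   makes the optimum 0, whereas the panel of the k zero agents is drawn with
   positive probability and outputs x0, which has positive social cost; so the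
   expected panel cost exceeds every multiple of the optimum. *)

Section Costs.

Context {R : realType} {m : nat}.

Definition hinge_cost (t : R) (j : 'I_m) (x : Cube R m) : R :=
  Num.max 0 (t - pt x j).

Lemma hinge_cost_is_cost {t : R} (j : 'I_m) :
  0 <= t <= 1 -> is_cost (hinge_cost t j).
Proof.
move=> /andP[t0 t1]; rewrite /hinge_cost; split; [split|].
- move=> x; have /andP[x0 x1] := proj2_sig x j.
  rewrite le_max lexx /= ge_max ler01 /= /pt; lra.
- move=> x y; rewrite (bigD1 j) //=; apply: ler_wpDr; first exact: sumr_ge0.
  rewrite ler_norml !maxEle; set a := pt x j; set b := pt y j.
  have := ler_norm (a - b); have := ler_norm (b - a); rewrite distrC => h1 h2.
  by case: ifP => ha; case: ifP => hb; apply/andP; split; lra.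
- move=> x y /(_ j); rewrite !maxEle; by case: ifP => ha; case: ifP => hb; lra.
Qed.

Lemma hinge_cost_gt0 (t : R) (j : 'I_m) (x : Cube R m) :
  pt x j < t -> 0 < hinge_cost t j x.
Proof. by move=> xj_lt; rewrite lt_max subr_gt0 xj_lt orbT. Qed.

Lemma hinge_cost_eq0 (t : R) (j : 'I_m) (x : Cube R m) :
  t <= pt x j -> hinge_cost t j x = 0.
Proof. by move=> xj_ge; apply/max_idPl; rewrite subr_le0. Qed.

Lemma is_cost_ge0 (f : Cube R m -> R) (x : Cube R m) : is_cost f -> 0 <= f x.
Proof. by move=> [[/(_ x)/andP[]]]. Qed.

Lemma zero_is_cost : is_cost (fun _ : Cube R m => 0 : R).
Proof.
split; [split|] => //.
- by move=> _; rewrite lexx ler01.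
- by move=> x y; rewrite subrr normr0; apply: sumr_ge0.
Qed.

End Costs.

Section Allocations.

Context {R : realType} {m : nat}.

Lemma exists_lt_of_sum_lt (x : 'I_m -> R) (t : R) :
  \sum_(j < m) x j < m%:R * t -> exists j, x j < t.
Proof.
apply: contraPP => /forallNP x_ge; apply/negP; rewrite -leNgt.
have -> : m%:R * t = \sum_(j < m) t by rewrite sumr_const card_ord mulr_natl.
by apply: ler_sum => j _; rewrite leNgt; apply/negP/x_ge.
Qed.

Lemma XB_exists_underfunded {B : R} (y : XB R m B) :
  (1 < m)%N -> 0 < B -> B < m%:R -> exists j, pt (xb_pt y) j < Num.min 1 B.
Proof.
move=> m_gt1 B_gt0 B_ltm; apply: exists_lt_of_sum_lt.
apply: le_lt_trans (proj2_sig y) _.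
have m_gt1R : 1 < m%:R :> R by rewrite ltr1n.
by have [_|_] := leP 1 B; rewrite ?mulr1 // ltr_pMl.
Qed.

Lemma XB_exists_coord {B t : R} (j : 'I_m) :
  0 <= t <= 1 -> t <= B -> exists y : XB R m B, pt (xb_pt y) j = t.
Proof.
move=> t01 tB.
have in_cube i : 0 <= (if i == j then t else 0) <= 1.
  by case: (i == j); rewrite ?lexx ?ler01.
pose c : Cube R m := exist _ _ in_cube.
have in_XB : \sum_(i < m) pt c i <= B by rewrite /= -big_mkcond big_pred1_eq.
pose y : XB R m B := exist _ c in_XB.
by exists y; rewrite /pt /= eqxx.
Qed.

End Allocations.

Section SocialCost.

Context {R : realType} {m n : nat} {Cost : 'I_n -> Cube R m -> R}.
Hypothesis Cost_ge0 : forall i x, 0 <= Cost i x.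

Lemma social_cost_ge0 (x : Cube R m) : 0 <= social_cost Cost x.
Proof. by apply: divr_ge0 => //; apply: sumr_ge0. Qed.

Lemma social_opt_eq0 {B : R} (y : XB R m B) :
  social_cost Cost (xb_pt y) = 0 -> social_opt B Cost = 0.
Proof.
move=> cost_y0; rewrite /social_opt.
set costs := (X in inf X).
have costs0 : costs 0 by exists y.
have costs_ge0 : lbound costs 0 by move=> _ [z _ <-]; exact: social_cost_ge0.
apply/eqP; rewrite eq_le; apply/andP; split.
- by apply: (ge_inf _ costs0); exists 0.
- by apply: lb_le_inf => //; exists 0.
Qed.

Lemma panel_eq0 (k : nat) (S : {set 'I_n}) :
  (forall i, i \in S -> Cost i = fun _ => 0) -> panel k Cost S = fun _ _ => 0.
Proof.
move=> S_zero; apply: funext => i; rewrite /panel.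
case E: (enum S) => [|j0 s]; first by rewrite nth_nil.
have [i_lt|i_ge] := ltnP i (size (j0 :: s)); last by rewrite nth_default ?size_map.
by rewrite (nth_map j0) // S_zero // -mem_enum E mem_nth.
Qed.

Lemma expected_panel_cost_gt0 {k : nat} {B : R}
    (xt : ('I_k -> Cube R m -> R) -> XB R m B) (S : {set 'I_n}) :
  #|S| = k -> 0 < social_cost Cost (xb_pt (xt (panel k Cost S))) ->
  0 < expected_panel_cost xt Cost.
Proof.
move=> card_S cost_S_gt0; apply: divr_gt0.
  rewrite (bigD1 S) ?card_S //=; apply: ltr_pwDl => //.
  by apply: sumr_ge0 => T _; exact: social_cost_ge0.
by rewrite ltr0n card_gt0; apply/set0Pn; exists S; rewrite inE card_S.
Qed.

End SocialCost.

Section LoneAgent.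

Context {R : realType} {m : nat}.
Variables (k : nat) (c : Cube R m -> R).

Definition lone_agent_costs (i : 'I_k.+1) : Cube R m -> R :=
  if i == ord_max then c else fun _ => 0.

Lemma lone_agent_costs_is_cost i : is_cost c -> is_cost (lone_agent_costs i).
Proof. by rewrite /lone_agent_costs; case: ifP => // _ _; exact: zero_is_cost. Qed.

Lemma social_cost_lone_agent (x : Cube R m) :
  social_cost lone_agent_costs x = c x / k.+1%:R.
Proof.
rewrite /social_cost (bigD1 ord_max) //= big1 ?addr0 /lone_agent_costs ?eqxx //.
by move=> i /negbTE ->.
Qed.

Lemma panel_lone_agent_omitted :
  panel k lone_agent_costs [set~ ord_max] = fun _ _ => 0.
Proof.
by apply: panel_eq0 => i; rewrite in_setC1 /lone_agent_costs => /negbTE ->.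
Qed.

End LoneAgent.

Theorem theorem3p4 (R : realType) (m k : nat) (B : R)
  (hm : (2 <= m)%N) (hk : (1 <= k)%N) (hB0 : 0 < B) (hBm : B < m%:R)
  (xt : ('I_k -> Cube R m -> R) -> XB R m B) :
  exists (n : nat) (Cost : 'I_n -> Cube R m -> R),
    (k <= n)%N /\ (forall i, is_cost (Cost i)) /\
    forall rho : R, 1 < rho ->
      expected_panel_cost xt Cost > rho * social_opt B Cost.
Proof.
set t := Num.min 1 B.
have t01 : 0 <= t <= 1 by rewrite le_min ler01 ge_min lexx (ltW hB0).
have tB : t <= B by rewrite ge_min lexx orbT.
have [j x0j_lt] := XB_exists_underfunded (xt (fun _ _ => 0)) hm hB0 hBm.
pose Cost := lone_agent_costs k (hinge_cost t j).
have Cost_is_cost i : is_cost (Cost i).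
  exact: lone_agent_costs_is_cost (hinge_cost_is_cost j t01).
have Cost_ge0 i x : 0 <= Cost i x by exact: is_cost_ge0 (Cost_is_cost i).
exists k.+1, Cost; split=> //; split=> // rho _.
have [y yj] := XB_exists_coord j t01 tB.
rewrite (social_opt_eq0 Cost_ge0 y) ?mulr0; last first.
  by rewrite social_cost_lone_agent hinge_cost_eq0 ?yj ?mul0r.
apply: (expected_panel_cost_gt0 Cost_ge0 xt [set~ ord_max]).
  by rewrite cardsC1 card_ord.
rewrite panel_lone_agent_omitted social_cost_lone_agent divr_gt0 ?ltr0n //.
exact: hinge_cost_gt0.
Qed.
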